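(* A non-failed Boolean CSP is closed under the applications of (each of) the rules of the proof system BOOL if and only if it is hyper-arc consistent.
   Context: A Boolean CSP is $\langle \mathcal C; x_1\in D_1,\dots,x_n\in D_n\rangle$ with $D_i\subseteq\{0,1\}$ and $\mathcal C$ a finite set of Boolean constraints, each of one of the forms $u=v$ (relation $\{(0,0),(1,1)\}$), $\neg u=v$ ($\{(0,1),(1,0)\}$), $u\wedge v=w$ ($\{(0,0,0),(0,1,0),(1,0,0),(1,1,1)\}$), $u\vee v=w$ ($\{(0,0,0),(0,1,1),(1,0,1),(1,1,1)\}$) on distinct variables among $x_1,\dots,x_n$; each constraint is always understood as restricted to the current domains, i.e. intersected with the product of the domains of its variables. We write $x=d$ for $x\in\{d\}$. A CSP is failed if some domain is empty. A constraint is solved if it equals the product of the domains of its variables. A CSP $\phi$ is a reformulation of $\psi$ if removing the solved constraints from both yields the same CSP. The proof system BOOL consists of the rules (constraint, premise $\rightarrow$ conclusion; $x,y,z$ schematic): EQU1: $x=y$, $x=1\rightarrow y=1$; EQU2: $x=y$, $y=1\rightarrow x=1$; EQU3: $x=y$, $x=0\rightarrow y=0$; EQU4: $x=y$, $y=0\rightarrow x=0$; NOT1: $\neg x=y$, $x=1\rightarrow y=0$; NOT2: $\neg x=y$, $x=0\rightarrow y=1$; NOT3: $\neg x=y$, $y=1\rightarrow x=0$; NOT4: $\neg x=y$, $y=0\rightarrow x=1$; AND1: $x\wedge y=z$, $x=1,y=1\rightarrow z=1$; AND2: $x\wedge y=z$, $x=1,z=0\rightarrow y=0$; AND3: $x\wedge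 y=z$, $y=1,z=0\rightarrow x=0$; AND4: $x\wedge y=z$, $x=0\rightarrow z=0$; AND5: $x\wedge y=z$, $y=0\rightarrow z=0$; AND6: $x\wedge y=z$, $z=1\rightarrow x=1,y=1$; OR1: $x\vee y=z$, $x=1\rightarrow z=1$; OR2: $x\vee y=z$, $x=0,y=0\rightarrow z=0$; OR3: $x\vee y=z$, $x=0,z=1\rightarrow y=1$; OR4: $x\vee y=z$, $y=0,z=1\rightarrow x=1$; OR5: $x\vee y=z$, $y=1\rightarrow z=1$; OR6: $x\vee y=z$, $z=0\rightarrow x=0,y=0$. On CSPs, such a rule with constraint $c$, premise $X=s$ and conclusion $Y=t$ is the deterministic rule $\dfrac{\langle c;\ X=s,\ \text{other variables of } c \text{ in their domains}\rangle}{\langle \emptyset;\ X=s,\ \text{each } y_j\in Y \text{ with domain } D_{y_j}\cap\{t_j\},\ \text{other variables unchanged}\rangle}$. E.g. AND6 is $\dfrac{\langle x\wedge y=z;\ x\in D_x,y\in D_y,z=1\rangle}{\langle\emptyset;\ x\in D_x\cap\{1\},y\in D_y\cap\{1\},z=1\rangle}$. It can be applied to a CSP $\langle\mathcal C\cup\{c\};\mathcal D\cup\mathcal D_1\rangle$ where $\mathcal D_1$ matches its premise (the constraint $c$ instantiated by distinct variables, variables in $X$ having exactly the domains $\{s_i\}$); the result replaces $c$ and $\mathcal D_1$ by the conclusion's constraints and domain expressions. An application is relevant if its result is not a reformulation of the CSP it was applied to. A CSP is closed under the applications of a rule $R$ if either $R$ cannot be applied to it or no application of $R$ to it is relevant.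 A constraint $C$ is hyper-arc consistent if for every variable of $C$, each value in its domain participates in a solution to $C$ (a tuple of $C$ restricted to the current domains). A CSP is hyper-arc consistent if every constraint of it is. *)

From HB Require Import structures.
From mathcomp Require Import all_boot.
Set Implicit Arguments. Unset Strict Implicit. Unset Printing Implicit Defensive.

Section BoolCSP.
Variable n : nat.

(* Constraints: u = v, (not u) = v, u /\ v = w, u \/ v = w. *)
Inductive bcons : Type :=
  | CEq  of 'I_n & 'I_n
  | CNot of 'I_n & 'I_n
  | CAnd of 'I_n & 'I_n & 'I_n
  | COr  of 'I_n & 'I_n & 'I_n.

Definition bcons_enc (c : bcons) :
  (('I_n * 'I_n) + ('I_n * 'I_n)) + (('I_n * 'I_n * 'I_n) + ('I_n * 'I_n * 'I_n)) :=
  match c with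
  | CEq u v => inl (inl (u, v))
  | CNot u v => inl (inr (u, v))
  | CAnd u v w => inr (inl (u, v, w))
  | COr u v w => inr (inr (u, v, w))
  end.

Definition bcons_dec (e : (('I_n * 'I_n) + ('I_n * 'I_n)) +
                          (('I_n * 'I_n * 'I_n) + ('I_n * 'I_n * 'I_n))) : bcons :=
  match e with
  | inl (inl (u, v)) => CEq u v
  | inl (inr (u, v)) => CNot u v
  | inr (inl (u, v, w)) => CAnd u v w
  | inr (inr (u, v, w)) => COr u v w
  end.

Lemma bcons_encK : cancel bcons_enc bcons_dec.
Proof. by case. Qed.

HB.instance Definition _ := Finite.copy bcons (can_type bcons_encK).

Definition cvars (c : bcons) : seq 'I_n :=
  match c with
  | CEq u v | CNot u v => [:: u; v]
  | CAnd u v w | COr u v w => [:: u; v; w]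
  end.

Definition cfst (c : bcons) : 'I_n :=
  match c with CEq u _ | CNot u _ | CAnd u _ _ | COr u _ _ => u end.

Definition cvar (c : bcons) (k : nat) : 'I_n := nth (cfst c) (cvars c) k.

Definition csat (c : bcons) (f : 'I_n -> bool) : bool :=
  match c with
  | CEq u v => f u == f v
  | CNot u v => ~~ f u == f v
  | CAnd u v w => (f u && f v) == f w
  | COr u v w => (f u || f v) == f w
  end.

Record csp := CSP { ccons : {set bcons}; cdom : 'I_n -> {set bool} }.

Definition wf_csp (phi : csp) : Prop :=
  forall c, c \in ccons phi -> uniq (cvars c).

Definition failed (phi : csp) : Prop := exists x, cdom phi x = set0.

Definition in_doms (phi : csp) (c : bcons) (f : 'I_n -> bool) : Prop :=
  forall x, x \in cvars c -> f x \in cdom phi x.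

(* c is solved: (relation of c) /\ (product of domains) = product of domains *)
Definition solved (phi : csp) (c : bcons) : Prop :=
  forall f, in_doms phi c f -> csat c f.

(* phi is a reformulation of psi: removing the solved constraints from both
   yields the same CSP. *)
Definition reformulation (phi psi : csp) : Prop :=
  (forall x, cdom phi x = cdom psi x) /\
  (forall c, (c \in ccons phi /\ ~ solved phi c) <-> (c \in ccons psi /\ ~ solved psi c)).

Definition hac_cons (phi : csp) (c : bcons) : Prop :=
  forall x a, x \in cvars c -> a \in cdom phi x ->
    exists f, [/\ in_doms phi c f, csat c f & f x = a].

Definition hac (phi : csp) : Prop :=
  forall c, c \in ccons phi -> hac_cons phi c.

End BoolCSP.

Inductive ckind := KEq | KNot | KAnd | KOr.

Definition kind_of n (c : bcons n) : ckind :=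
  match c with CEq _ _ => KEq | CNot _ _ => KNot | CAnd _ _ _ => KAnd | COr _ _ _ => KOr end.

(* A rule: the form of its constraint, its premise and its conclusion, each a
   list of (position of schematic variable, value); positions 0,1,2 stand for
   the schematic variables x,y,z. *)
Record brule := BRule { rkind : ckind; rprem : seq (nat * bool); rconcl : seq (nat * bool) }.

Inductive rule_name :=
  | EQU1 | EQU2 | EQU3 | EQU4
  | NOT1 | NOT2 | NOT3 | NOT4
  | AND1 | AND2 | AND3 | AND4 | AND5 | AND6
  | OR1 | OR2 | OR3 | OR4 | OR5 | OR6.

Definition rule_of (r : rule_name) : brule :=
  match r with
  | EQU1 => BRule KEq [:: (0, true)] [:: (1, true)]
  | EQU2 => BRule KEq [:: (1, true)] [:: (0, true)]
  | EQU3 => BRule KEq [:: (0, false)] [:: (1, false)]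
  | EQU4 => BRule KEq [:: (1, false)] [:: (0, false)]
  | NOT1 => BRule KNot [:: (0, true)] [:: (1, false)]
  | NOT2 => BRule KNot [:: (0, false)] [:: (1, true)]
  | NOT3 => BRule KNot [:: (1, true)] [:: (0, false)]
  | NOT4 => BRule KNot [:: (1, false)] [:: (0, true)]
  | AND1 => BRule KAnd [:: (0, true); (1, true)] [:: (2, true)]
  | AND2 => BRule KAnd [:: (0, true); (2, false)] [:: (1, false)]
  | AND3 => BRule KAnd [:: (1, true); (2, false)] [:: (0, false)]
  | AND4 => BRule KAnd [:: (0, false)] [:: (2, false)]
  | AND5 => BRule KAnd [:: (1, false)] [:: (2, false)]
  | AND6 => BRule KAnd [:: (2, true)] [:: (0, true); (1, true)]
  | OR1 => BRule KOr [:: (0, true)] [:: (2, true)]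
  | OR2 => BRule KOr [:: (0, false); (1, false)] [:: (2, false)]
  | OR3 => BRule KOr [:: (0, false); (2, true)] [:: (1, true)]
  | OR4 => BRule KOr [:: (1, false); (2, true)] [:: (0, true)]
  | OR5 => BRule KOr [:: (1, true)] [:: (2, true)]
  | OR6 => BRule KOr [:: (2, false)] [:: (0, false); (1, false)]
  end.

Section Apply.
Variable n : nat.

Definition applicable (R : brule) (phi : csp n) (c : bcons n) : Prop :=
  [/\ c \in ccons phi, kind_of c = rkind R &
      forall ks, ks \in rprem R -> cdom phi (cvar c ks.1) = [set ks.2]].

(* The result: c is removed, each conclusion variable y gets D_y :&: {t}. *)
Definition apply_rule (R : brule) (phi : csp n) (c : bcons n) : csp n :=
  CSP (ccons phi :\ c)
      (fun x => cdom phi x :&: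
                [set b | all (fun kt : nat * bool => (cvar c kt.1 == x) ==> (b == kt.2))
                             (rconcl R)]).

Definition relevant (R : brule) (phi : csp n) (c : bcons n) : Prop :=
  ~ reformulation (apply_rule R phi c) phi.

Definition closed_under (phi : csp n) (R : brule) : Prop :=
  (~ exists c, applicable R phi c) \/
  (forall c, applicable R phi c -> ~ relevant R phi c).

End Apply.

From HB Require Import structures.
From mathcomp Require Import all_boot.
Set Implicit Arguments. Unset Strict Implicit. Unset Printing Implicit Defensive.

(** Closure under a rule at a constraint [c] means that whenever the premise
    holds, the conclusion removes no value and [c] is already solved. This,
    hyper-arc consistency of [c], and applicability of a rule at [c] depend
    only on which values lie in the domains of the (distinct) variables of
    [c]. Hence the theorem reduces, constraint by constraint, to a finite check
    over the non-empty domain profiles of the four kinds of constraints. *)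

Definition ternary (k : ckind) : bool :=
  match k with KAnd | KOr => true | KEq | KNot => false end.

Definition kind_rel (k : ckind) (a b d : bool) : bool :=
  match k with
  | KEq => a == b
  | KNot => ~~ a == b
  | KAnd => (a && b) == d
  | KOr => (a || b) == d
  end.

Definition bools : seq bool := [:: false; true].

Lemma mem_bools b : b \in bools. Proof. by case: b. Qed.

(* For a binary constraint [cvar c 2] defaults to [cvar c 0], so the third
   component [d] of a value triple is tied to the first one. *)
Definition third_values (k : ckind) (a : bool) : seq bool :=
  if ternary k then bools else [:: a].

Lemma mem_third_values k a d : (d \in third_values k a) = ternary k || (d == a).
Proof. by rewrite /third_values; case: (ternary k); rewrite ?mem_bools ?inE. Qed.

Definition all_triples k (P : bool -> bool -> bool -> bool) : bool :=
  all (fun a => all (fun b => all (P a b) (third_values k a)) bools) bools.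

Definition has_triple k (P : bool -> bool -> bool -> bool) : bool :=
  has (fun a => has (fun b => has (P a b) (third_values k a)) bools) bools.

Lemma all_triplesP k P :
  all_triples k P <-> forall a b d, ternary k || (d == a) -> P a b d.
Proof.
split=> [/allP PP a b d ad | PP].
  by move/allP: (PP a (mem_bools a)) => /(_ b (mem_bools b)) /allP; apply;
    rewrite mem_third_values.
apply/allP=> a _; apply/allP=> b _; apply/allP=> d.
by rewrite mem_third_values; apply: PP.
Qed.

Lemma has_tripleP k P :
  has_triple k P <-> exists a b d, (ternary k || (d == a)) /\ P a b d.
Proof.
split=> [/hasP[a _ /hasP[b _ /hasP[d]]] | [a [b [d [ad Pabd]]]]].
  by rewrite mem_third_values => ad Pabd; exists a, b, d.
apply/hasP; exists a; rewrite ?mem_bools //; apply/hasP; exists b; rewrite ?mem_bools //.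
by apply/hasP; exists d; rewrite ?mem_third_values.
Qed.

(* A domain profile [D] of a constraint: [D i b] iff [b] lies in the domain of
   its [i]-th variable. *)
Definition prof_solved k (D : nat -> bool -> bool) : bool :=
  all_triples k (fun a b d => [&& D 0 a, D 1 b & D 2 d] ==> kind_rel k a b d).

Definition prof_supported k (D : nat -> bool -> bool) (i : nat) (e : bool) : bool :=
  has_triple k (fun a b d =>
    [&& D 0 a, D 1 b, D 2 d, kind_rel k a b d & nth a [:: a; b; d] i == e]).

Definition prof_hac k (D : nat -> bool -> bool) : bool :=
  all (fun i => all (fun e => D i e ==> prof_supported k D i e) bools) [:: 0; 1; 2].

Definition prof_prem (R : brule) (D : nat -> bool -> bool) : bool :=
  all (fun ks : nat * bool => D ks.1 ks.2 && ~~ D ks.1 (~~ ks.2)) (rprem R).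

Definition prof_concl_idle (R : brule) (D : nat -> bool -> bool) : bool :=
  all (fun kt : nat * bool => ~~ D kt.1 (~~ kt.2)) (rconcl R).

Definition rules_of_kind (k : ckind) : seq rule_name :=
  match k with
  | KEq => [:: EQU1; EQU2; EQU3; EQU4]
  | KNot => [:: NOT1; NOT2; NOT3; NOT4]
  | KAnd => [:: AND1; AND2; AND3; AND4; AND5; AND6]
  | KOr => [:: OR1; OR2; OR3; OR4; OR5; OR6]
  end.

Lemma all_rules_of_kindP k (P : rule_name -> bool) :
  all P (rules_of_kind k) <-> forall r, rkind (rule_of r) = k -> P r.
Proof.
split=> [|PP]; last by case: k PP => PP; rewrite /= !PP.
move=> PP r rk; rewrite -rk in PP.
by case: r {rk} PP => /=; do ![case/andP=> ? | assumption].
Qed.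

Lemma prof_closed_iff_hac k (D : nat -> bool -> bool) :
  (forall i, i < 3 -> D i false || D i true) ->
  (~~ ternary k -> D 2 =1 D 0) ->
  all (fun r => prof_prem (rule_of r) D ==>
                prof_concl_idle (rule_of r) D && prof_solved k D) (rules_of_kind k)
  = prof_hac k D.
Proof.
move=> ne D20; move: (ne 0 isT) (ne 1 isT) (ne 2 isT).
rewrite /prof_hac /prof_supported /prof_solved /prof_prem /prof_concl_idle
  /all_triples /has_triple.
case: k D20 => [D20|D20|_|_] /=; rewrite ?D20 //.
all: by case: (D 0 false); case: (D 0 true); case: (D 1 false); case: (D 1 true);
  case: (D 2 false); case: (D 2 true).
Qed.

Lemma eq_set1_bool (A : {set bool}) s : (A = [set s]) <-> (s \in A) && (~~ s \notin A).
Proof.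
split=> [-> | /andP[sA nsA]]; first by rewrite !inE eqxx; case: s.
apply/setP=> b; rewrite inE.
by case: b; case: s sA nsA => /= sA nsA; rewrite ?sA ?(negbTE nsA).
Qed.

Section DomainProfile.
Variables (n : nat) (phi : csp n).
Implicit Types (c : bcons n) (f : 'I_n -> bool) (R : brule).

Definition dom_profile c (i : nat) (b : bool) : bool := b \in cdom phi (cvar c i).

Lemma cvar_mem c i : i < 3 -> cvar c i \in cvars c.
Proof.
by move=> i3; case: c => *; case: i i3 => [|[|[|]]] //= _; rewrite !inE eqxx ?orbT.
Qed.

Lemma cvarsP c x : x \in cvars c -> exists2 i, i < 3 & x = cvar c i.
Proof.
move=> xc; exists (index x (cvars c)); last by rewrite /cvar nth_index.
by apply: leq_trans (_ : size (cvars c) <= 3); rewrite ?index_mem //; case: c {xc}.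
Qed.

Lemma cvar2_binary c : ~~ ternary (kind_of c) -> cvar c 2 = cvar c 0.
Proof. by case: c. Qed.

Lemma ternary_or_cvar2 c : ternary (kind_of c) || (cvar c 2 == cvar c 0).
Proof. by case: c => * /=; rewrite ?eqxx. Qed.

Lemma csat_kind_rel c f :
  csat c f = kind_rel (kind_of c) (f (cvar c 0)) (f (cvar c 1)) (f (cvar c 2)).
Proof. by case: c. Qed.

Lemma assignment_exists c a b d :
  uniq (cvars c) -> ternary (kind_of c) || (d == a) ->
  exists f, [/\ f (cvar c 0) = a, f (cvar c 1) = b & f (cvar c 2) = d].
Proof.
case: c => u v => [||w|w]; rewrite /cvar /= ?inE ?andbT ?negb_or.
- by move=> uv /eqP->; exists (fun x => if x == u then a else b);
    rewrite eqxx eq_sym (negbTE uv).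
- by move=> uv /eqP->; exists (fun x => if x == u then a else b);
    rewrite eqxx eq_sym (negbTE uv).
all: move=> /andP[/andP[uv uw] vw] _;
  exists (fun x => if x == u then a else if x == v then b else d).
all: by rewrite eqxx !(eq_sym _ u) (negbTE uv) (negbTE uw) eqxx eq_sym (negbTE vw).
Qed.

Lemma in_domsE c f : in_doms phi c f <->
  [&& dom_profile c 0 (f (cvar c 0)), dom_profile c 1 (f (cvar c 1))
    & dom_profile c 2 (f (cvar c 2))].
Proof.
split=> [fD | /and3P[f0 f1 f2] x /cvarsP[[|[|[|]]] // _ ->]] //.
by apply/and3P; split; apply: fD; apply: cvar_mem.
Qed.

Lemma solvedE c : uniq (cvars c) ->
  solved phi c <-> prof_solved (kind_of c) (dom_profile c).
Proof.
move=> cu; split=> [sc | /all_triplesP sD f /in_domsE fD].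
  apply/all_triplesP=> a b d ad; apply/implyP=> /and3P[Da Db Dd].
  have [f [f0 f1 f2]] := assignment_exists b cu ad.
  by rewrite -f0 -f1 -f2 -csat_kind_rel; apply/sc/in_domsE; rewrite f0 f1 f2 Da Db Dd.
rewrite csat_kind_rel; apply: (implyP (sD _ _ _ _)) fD.
by case/orP: (ternary_or_cvar2 c) => [-> // | /eqP->]; rewrite eqxx orbT.
Qed.

Lemma hac_consE c : uniq (cvars c) ->
  hac_cons phi c <-> prof_hac (kind_of c) (dom_profile c).
Proof.
move=> cu; split=> [hc | hD x e /cvarsP[i i3 ->] De].
  apply/allP=> i i012; apply/allP=> e _; apply/implyP=> De.
  have i3 : i < 3 by move: i012; rewrite !inE => /or3P[] /eqP->.
  have [f [/in_domsE fD fc fe]] := hc _ _ (cvar_mem c i3) De.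
  apply/has_tripleP; exists (f (cvar c 0)), (f (cvar c 1)), (f (cvar c 2)); split.
    by case/orP: (ternary_or_cvar2 c) => [-> // | /eqP->]; rewrite eqxx orbT.
  case/and3P: fD => -> -> ->; rewrite -csat_kind_rel fc.
  by move: i012 fe; rewrite !inE => /or3P[] /eqP-> /= ->.
have i012 : i \in [:: 0; 1; 2] by case: i i3 {De} => [|[|[|]]].
move/allP: hD => /(_ i i012) /allP /(_ e (mem_bools e)) /implyP /(_ De).
case/has_tripleP=> a [b [d [ad /and5P[Da Db Dd abd ie]]]].
have [f [f0 f1 f2]] := assignment_exists b cu ad.
exists f; split; first by apply/in_domsE; rewrite f0 f1 f2 Da Db Dd.
  by rewrite csat_kind_rel f0 f1 f2.
by case: i i3 {De i012} ie => [|[|[|]]] // _ /eqP <-.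
Qed.

Lemma applicableE R c : applicable R phi c <->
  [/\ c \in ccons phi, kind_of c = rkind R & prof_prem R (dom_profile c)].
Proof.
split=> [[cP ck prem] | [cP ck /allP prem]]; split=> //.
  by apply/allP=> ks /prem /eq_set1_bool.
by move=> ks /prem /eq_set1_bool.
Qed.

Lemma apply_rule_domsE R c :
  (forall x, cdom (apply_rule R phi c) x = cdom phi x) <->
  prof_concl_idle R (dom_profile c).
Proof.
split=> [E | /allP idle x].
  apply/allP=> -[k t] kt /=; apply/negP; rewrite /dom_profile => Dk.
  move/setP: (E (cvar c k)) => /(_ (~~ t)); rewrite /= !inE Dk /=.
  by move/allP=> /(_ _ kt) /=; rewrite eqxx; case: t {kt Dk}.
apply/setP=> b; rewrite /= !inE; case Db: (b \in cdom phi x) => //=.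
apply/allP=> -[k t] kt /=; apply/implyP=> /eqP xk; subst x.
by move: (idle _ kt); rewrite /dom_profile /=; case: b t Db {kt} => [] [] // ->.
Qed.

Lemma reformulation_apply_ruleE R c : c \in ccons phi -> uniq (cvars c) ->
  reformulation (apply_rule R phi c) phi <->
  prof_concl_idle R (dom_profile c) && prof_solved (kind_of c) (dom_profile c).
Proof.
move=> cP cu; split=> [[/apply_rule_domsE -> /(_ c)[_ keep_c]] | /andP[]].
  case sD: prof_solved => //.
  have not_sc : ~ solved phi c by move/(solvedE cu); rewrite sD.
  by case: (keep_c (conj cP not_sc)); rewrite /= !inE eqxx.
move=> /apply_rule_domsE E /(solvedE cu) sc; split=> // c'.
have same_solved : solved (apply_rule R phi c) c' <-> solved phi c'.
  by split=> sc' f fD; apply: sc' => x /fD; rewrite E.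
rewrite /= !inE; case: (eqVneq c' c) => [-> | _] /=; first by split=> [[] | [_ []]].
by split=> -[c'P not_sc']; split=> // sc'; apply: not_sc'; apply/same_solved.
Qed.

Lemma dom_profile_nonempty c :
  ~ failed phi -> forall i, i < 3 -> dom_profile c i false || dom_profile c i true.
Proof.
move=> nf i _; rewrite /dom_profile.
have /set0Pn[[] ->] : cdom phi (cvar c i) != set0.
  by apply/eqP=> D0; apply: nf; exists (cvar c i).
all: by rewrite ?orbT.
Qed.

Lemma dom_profile_binary c :
  ~~ ternary (kind_of c) -> dom_profile c 2 =1 dom_profile c 0.
Proof. by move=> /cvar2_binary c20 b; rewrite /dom_profile c20. Qed.

Lemma irrelevant_rules_iff_hac_cons c :
  c \in ccons phi -> uniq (cvars c) -> ~ failed phi ->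
  (forall r, applicable (rule_of r) phi c -> ~ relevant (rule_of r) phi c) <->
  hac_cons phi c.
Proof.
move=> cP cu nf; have finite_check := prof_closed_iff_hac
  (dom_profile_nonempty c nf) (@dom_profile_binary c).
apply: (iff_trans _ (iff_sym (hac_consE cu))); rewrite -finite_check.
split=> [irrelevant | /all_rules_of_kindP idle r /applicableE[_ rk prem]].
  apply/all_rules_of_kindP=> r rk; apply/implyP=> prem.
  have app : applicable (rule_of r) phi c by apply/applicableE.
  apply/negPn/negP=> not_idle; apply: (irrelevant r app).
  by move/(reformulation_apply_ruleE _ cP cu); apply/negP.
move/implyP: (idle r (esym rk)) => /(_ prem) /(reformulation_apply_ruleE _ cP cu) ref.
by apply.
Qed.

End DomainProfile.

Lemma closed_underE n (phi : csp n) R :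
  closed_under phi R <-> forall c, applicable R phi c -> ~ relevant R phi c.
Proof.
split=> [[not_app c app | //] | irrelevant]; last by right.
by case: not_app; exists c.
Qed.

Theorem theorem4 (n : nat) (phi : csp n) :
  wf_csp phi -> ~ failed phi ->
  ((forall r : rule_name, closed_under phi (rule_of r)) <-> hac phi).
Proof.
move=> wf nf; split=> [closed c cP | hac_phi r].
  apply/(irrelevant_rules_iff_hac_cons cP (wf c cP) nf) => r.
  by move/closed_underE: (closed r); apply.
apply/closed_underE=> c app; have [cP _ _] := app.
exact: (irrelevant_rules_iff_hac_cons cP (wf c cP) nf).2 (hac_phi c cP) r app.
Qed.
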